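(* Let $n\ge 2$ and $H\le\operatorname{Sym}(n)$. The set $V_n(H)$ of homeomorphisms of $\mathfrak{C}_n$ described by tables (as in the context) is a group under composition.
   Context: Let $\mathcal{A}_n=\{0,1,\dots,n-1\}$, let $\mathcal{A}_n^*$ be the set of finite words over $\mathcal{A}_n$ (including the empty word), and let $\mathfrak{C}_n=\mathcal{A}_n^{\mathbb{N}}$ (infinite words, product topology). For $u\in\mathcal{A}_n^*$ and $v$ a finite or infinite word, $uv$ denotes concatenation, and $u\le_{pref} v$ means $v=uw$ for some word $w$. A (complete) prefix code of $\mathfrak{C}_n$ is a finite set $S\subset\mathcal{A}_n^*$ such that every $\zeta\in\mathfrak{C}_n$ has exactly one $s\in S$ with $s\le_{pref}\zeta$. A permutation $\sigma\in\operatorname{Sym}(n)$ acts on words letterwise: $\sigma(z_1z_2\cdots)=\sigma(z_1)\sigma(z_2)\cdots$. A table consists of two prefix codes $P=\{p_1,\dots,p_k\}$ and $Q=\{q_1,\dots,q_k\}$ of $\mathfrak{C}_n$ of the same size $k\ge1$ together with $\sigma_i,\tau_i\in H$ ($1\le i\le k$); it describes the homeomorphism of $\mathfrak{C}_n$ sending $p_i\,\sigma_i(u)\mapsto q_i\,\tau_i(u)$ for all $u\in\mathfrak{C}_n$ and all $i$. *)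

From mathcomp Require Import all_boot all_fingroup.
Set Implicit Arguments. Unset Strict Implicit. Unset Printing Implicit Defensive.

Definition word (n : nat) := seq 'I_n.
Definition cantor (n : nat) := nat -> 'I_n.

Definition wcat n (u : word n) (z : cantor n) : cantor n :=
  fun i => nth (z (i - size u)) u i.

Definition wprefix n (u : word n) (z : cantor n) : Prop :=
  forall i, i < size u -> nth (z i) u i = z i.

Definition prefix_code n (S : seq (word n)) : Prop :=
  uniq S /\ forall z : cantor n, exists! s, s \in S /\ wprefix s z.

Definition pact n (s : {perm 'I_n}) (z : cantor n) : cantor n := fun i => s (z i).

(* a table: the list of rows (p_i, q_i, sigma_i, tau_i), i = 1..k, k >= 1 *)
Definition table n := seq (word n * word n * {perm 'I_n} * {perm 'I_n}).

Definition is_table n (H : {set {perm 'I_n}}) (T : table n) : Prop :=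
  0 < size T /\
  prefix_code [seq r.1.1.1 | r <- T] /\
  prefix_code [seq r.1.1.2 | r <- T] /\
  (forall r, r \in T -> (r.1.2 \in H) && (r.2 \in H)).

Definition describes n (T : table n) (f : cantor n -> cantor n) : Prop :=
  forall r, r \in T -> forall u : cantor n,
    forall j, f (wcat r.1.1.1 (pact r.1.2 u)) j = wcat r.1.1.2 (pact r.2 u) j.

Definition inV n (H : {set {perm 'I_n}}) (f : cantor n -> cantor n) : Prop :=
  exists T : table n, is_table H T /\ describes T f.

Definition cont n (f : cantor n -> cantor n) : Prop :=
  forall (x : cantor n) (m : nat), exists N : nat, forall y : cantor n,
    (forall i, i < N -> y i = x i) -> forall i, i < m -> f y i = f x i.

Definition homeo n (f : cantor n -> cantor n) : Prop :=
  cont f /\ exists g : cantor n -> cantor n,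
    cont g /\ (forall x j, g (f x) j = x j) /\ (forall x j, f (g x) j = x j).

From mathcomp Require Import all_boot all_fingroup.
From Stdlib Require Import FunctionalExtensionality Setoid.
Set Implicit Arguments. Unset Strict Implicit. Unset Printing Implicit Defensive.

(* A row (p, q, s, t) of a table sends the cylinder p s(C_n) onto q t(C_n) by
   p s(u) |-> q t(u).  As P and Q are complete prefix codes, a map described by a
   table is locally such a shift, hence continuous, and exchanging P with Q (and
   s with t) describes its inverse.  To compose, a row a of the first table meets
   a row b of the second only if q_a and p_b are comparable for the prefix order.
   Restricting a row to the inputs p s(v u) gives the row (p s(v), q t(v), s, t);
   expanding the shorter of q_a, p_b in this way makes them equal, and the two
   rows then glue into one.  The glued rows form a table: the row above z pairs
   the row of the first table above z with the row of the second above its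
   image. *)

Lemma uniq_map_inj_in (T U : eqType) (f : T -> U) (s : seq T) :
  uniq (map f s) -> {in s &, injective f}.
Proof.
elim: s => //= c s IH /andP[fc_notin /IH{}IH] a b; rewrite !inE.
case/predU1P => [->|a_s]; case/predU1P => [->|b_s] // E.
- by case/negP: fc_notin; rewrite E map_f.
- by case/negP: fc_notin; rewrite -E map_f.
- exact: IH.
Qed.

Section InfiniteWords.

Variable n : nat.
Implicit Types (u v : word n) (z t : cantor n) (s : {perm 'I_n}).

Definition wtake k z : word n := mkseq z k.
Definition wdrop k z : cantor n := fun i => z (i + k).

Lemma wcatE u t i :
  wcat u t i = if i < size u then nth (t 0) u i else t (i - size u).
Proof. by rewrite /wcat; case: ltnP => lt_i; [apply: set_nth_default | rewrite nth_default]. Qed.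

Lemma wprefix_wtake u z : wprefix u z <-> wtake (size u) z = u.
Proof.
split=> [pre | E i lt_i].
  apply: (@eq_from_nth _ (z 0)); rewrite size_mkseq // => i lt_i.
  by rewrite nth_mkseq // -(pre i lt_i); apply: set_nth_default.
by rewrite -{1}E nth_mkseq.
Qed.

Lemma wtake_wcat u t k : wtake (size u + k) (wcat u t) = u ++ wtake k t.
Proof.
apply: (@eq_from_nth _ (t 0)); first by rewrite size_cat !size_mkseq.
move=> i; rewrite size_mkseq => lt_i; rewrite nth_mkseq // wcatE nth_cat.
by case: ltnP => // le_u_i; rewrite nth_mkseq // ltn_subLR.
Qed.

Lemma wtake_pact s k z : wtake k (pact s z) = map s (wtake k z).
Proof. by rewrite /wtake /mkseq -map_comp. Qed.

Lemma take_wtake i k z : take i (wtake k z) = wtake (minn i k) z.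
Proof. by rewrite /wtake /mkseq -map_take take_iota. Qed.

Lemma wcat_wtake_wdrop k z : wcat (wtake k z) (wdrop k z) = z.
Proof.
apply: functional_extensionality => i; rewrite wcatE size_mkseq.
by case: ltnP => [lt_i | le_k_i]; rewrite ?nth_mkseq // /wdrop subnK.
Qed.

Lemma wdrop_wcat u t : wdrop (size u) (wcat u t) = t.
Proof. by apply: functional_extensionality => i; rewrite /wdrop wcatE ltnNge leq_addl addnK. Qed.

Lemma wcat_cat u v t : wcat (u ++ v) t = wcat u (wcat v t).
Proof.
apply: functional_extensionality => i; rewrite /wcat nth_cat size_cat.
case: ltnP => le_u_i; first exact: set_nth_default.
by rewrite [in RHS]nth_default // subnDA.
Qed.

Lemma wprefix_wcat u t : wprefix u (wcat u t).
Proof. by apply/wprefix_wtake; rewrite -[size u]addn0 wtake_wcat cats0. Qed.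

Lemma wprefix_wcatP u s z : wprefix u z <-> exists t, z = wcat u (pact s t).
Proof.
split=> [/wprefix_wtake pre | [t ->]]; last exact: wprefix_wcat.
exists (pact s^-1 (wdrop (size u) z)).
rewrite (_ : pact s _ = wdrop (size u) z); first by rewrite -{1}pre wcat_wtake_wdrop.
by apply: functional_extensionality => i; rewrite /pact permKV.
Qed.

Lemma wprefix_cat_wcat u v t : wprefix (u ++ v) (wcat u t) <-> wprefix v t.
Proof.
split=> /wprefix_wtake pre; apply/wprefix_wtake; last by rewrite size_cat wtake_wcat pre.
by move: pre; rewrite size_cat wtake_wcat => /(congr1 (drop (size u))); rewrite !drop_size_cat.
Qed.

Lemma wprefix_catl u v z : wprefix (u ++ v) z -> wprefix u z.
Proof.
move=> /(wprefix_wcatP _ 1) [t ->]; rewrite wcat_cat; exact: wprefix_wcat.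
Qed.

Lemma pact_wcat s u t : pact s (wcat u t) = wcat (map s u) (pact s t).
Proof.
apply: functional_extensionality => i; rewrite /pact !wcatE size_map.
by case: ifP => // lt_i; rewrite (nth_map (t 0)).
Qed.

Lemma pactM s1 s2 z : pact s1 (pact s2 z) = pact (s2 * s1) z.
Proof. by apply: functional_extensionality => i; rewrite /pact permM. Qed.

Lemma pactK s : cancel (pact s) (pact s^-1).
Proof. by move=> z; apply: functional_extensionality => i; rewrite /pact permK. Qed.

Lemma wprefix_pact s u t : wprefix (map s u) (pact s t) <-> wprefix u t.
Proof.
split=> /wprefix_wtake pre; apply/wprefix_wtake; move: pre; rewrite size_map wtake_pact.
  exact/inj_map/perm_inj.
by move=> ->.
Qed.

(* Both joins equal the longer word exactly when one word is a prefix of the other. *)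
Definition wjoin u v := u ++ drop (size u) v.
Definition wcomparable u v := wjoin u v == wjoin v u.

Lemma wjoin_idl u v : size v <= size u -> wjoin u v = u.
Proof. by move=> le_vu; rewrite /wjoin drop_oversize ?cats0. Qed.

Lemma wcomparableC u v : wcomparable u v = wcomparable v u.
Proof. exact: eq_sym. Qed.

Lemma wprefix_wcomparable u v z : wprefix u z -> wprefix v z -> wcomparable u v.
Proof.
wlog le_vu : u v / size v <= size u => [hyp pu pv|].
  by case: (leqP (size v) (size u)) => [|/ltnW] le; [|rewrite wcomparableC]; apply: hyp.
move=> /wprefix_wtake pu /wprefix_wtake pv; rewrite /wcomparable wjoin_idl //.
have -> : v = take (size v) u by rewrite -pu take_wtake (minn_idPl le_vu) pv.
by rewrite /wjoin size_takel // cat_take_drop.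
Qed.

Lemma wprefix_wjoin u v z :
  wcomparable u v -> wprefix (wjoin u v) z <-> wprefix u z /\ wprefix v z.
Proof.
move=> /eqP uv; split=> [pre | [pu pv]].
  by split; [|rewrite uv in pre]; apply: wprefix_catl pre.
by case: (leqP (size v) (size u)) => [|/ltnW] le; [rewrite wjoin_idl | rewrite uv wjoin_idl].
Qed.

End InfiniteWords.

Notation src r := r.1.1.1.
Notation tgt r := r.1.1.2.
Notation sgm r := r.1.2.
Notation tau r := r.2.

Section Rows.

Variable n : nat.
Definition row := (word n * word n * {perm 'I_n} * {perm 'I_n})%type.
Implicit Types (a b r : row) (v : word n) (z : cantor n) (f g : cantor n -> cantor n).
Implicit Types (T : table n).

Definition obeys f r :=
  forall u, f (wcat (src r) (pact (sgm r) u)) = wcat (tgt r) (pact (tau r) u).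

Lemma describesP T f : describes T f <-> forall r, r \in T -> obeys f r.
Proof.
split=> fT r rT u; last by rewrite fT.
by apply: functional_extensionality; apply: fT.
Qed.

Definition row_apply r z : cantor n :=
  wcat (tgt r) (pact (tau r) (pact (sgm r)^-1 (wdrop (size (src r)) z))).

Lemma row_apply_obeys r : obeys (row_apply r) r.
Proof. by move=> u; rewrite /row_apply wdrop_wcat pactK. Qed.

Lemma obeysE f r z : obeys f r -> wprefix (src r) z -> f z = row_apply r z.
Proof. by move=> fr /(wprefix_wcatP _ (sgm r)) [u ->]; rewrite fr row_apply_obeys. Qed.

Definition swap_row r : row := (tgt r, src r, tau r, sgm r).

Lemma swap_rowK : involutive swap_row. Proof. by case=> [[[]]]. Qed.

Definition expand r v : row :=
  (src r ++ map (sgm r) v, tgt r ++ map (tau r) v, sgm r, tau r).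

Definition glue a b : row := (src a, tgt b, sgm a, (tau a * (sgm b)^-1 * tau b)%g).

Lemma obeys_expand f r v : obeys f r -> obeys f (expand r v).
Proof. by move=> fr u; rewrite /= !wcat_cat -!pact_wcat fr. Qed.

Lemma obeys_glue f g a b : obeys g a -> obeys f b -> tgt a = src b ->
  obeys (fun z => f (g z)) (glue a b).
Proof.
move=> ga fb ab u; rewrite /= ga ab -(pactK (sgm b)^-1 (pact _ u)) invgK fb.
by rewrite !pactM mulgA.
Qed.

(* Only the shorter of [tgt a] and [src b] gets a nonempty expansion, after which
   the two sides agree whenever they are prefix-comparable. *)
Definition comp_row a b : row :=
  glue (expand a (map (tau a)^-1%g (drop (size (tgt a)) (src b))))
       (expand b (map (sgm b)^-1%g (drop (size (src b)) (tgt a)))).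

Lemma obeys_comp_row f g a b : obeys g a -> obeys f b -> wcomparable (tgt a) (src b) ->
  obeys (fun z => f (g z)) (comp_row a b).
Proof.
move=> ga fb ab; apply: obeys_glue; try exact: obeys_expand.
by rewrite /= !(mapK (permKV _)); apply/eqP.
Qed.

Lemma wprefix_comp_row g a b z : obeys g a -> wcomparable (tgt a) (src b) ->
  wprefix (src a) z -> wprefix (src (comp_row a b)) z <-> wprefix (src b) (g z).
Proof.
move=> ga ab /(wprefix_wcatP _ (sgm a)) [u ->]; rewrite ga.
transitivity (wprefix (wjoin (tgt a) (src b)) (wcat (tgt a) (pact (tau a) u))).
  rewrite /= wprefix_cat_wcat wprefix_pact /wjoin wprefix_cat_wcat.
  by rewrite -{2}[drop _ _](mapK (permKV (tau a))) wprefix_pact.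
by rewrite wprefix_wjoin //; split=> [[]|] //; split=> //; apply: wprefix_wcat.
Qed.

End Rows.

Section Tables.

Variable n : nat.
Implicit Types (a b r : row n) (z : cantor n) (f g : cantor n -> cantor n).
Implicit Types (T A B : table n).

Lemma code_row_exists T z :
  prefix_code [seq src r | r <- T] -> exists2 r, r \in T & wprefix (src r) z.
Proof. by case=> _ /(_ z) [_ [[/mapP [r rT ->] pre] _]]; exists r. Qed.

Lemma code_row_unique T z a b : prefix_code [seq src r | r <- T] ->
  a \in T -> b \in T -> wprefix (src a) z -> wprefix (src b) z -> a = b.
Proof.
case=> uniqT /(_ z) [s [_ uniq_s]] aT bT pa pb; apply: (uniq_map_inj_in uniqT) => //.
have mem_src r : r \in T -> src r \in [seq src r | r <- T] by apply: map_f.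
by rewrite -(uniq_s _ (conj (mem_src a aT) pa)) -(uniq_s _ (conj (mem_src b bT) pb)).
Qed.

Definition id_row : row n := ([::], [::], 1%g, 1%g).

Definition lookup T z := nth id_row T (find (fun r => wtake (size (src r)) z == src r) T).

Lemma lookupP T z : prefix_code [seq src r | r <- T] ->
  lookup T z \in T /\ wprefix (src (lookup T z)) z.
Proof.
move=> /(code_row_exists z) [r rT rz].
have has_z : has (fun r => wtake (size (src r)) z == src r) T.
  by apply/hasP; exists r => //; apply/eqP/wprefix_wtake.
split; first by rewrite /lookup mem_nth // -has_find.
by apply/wprefix_wtake/eqP; apply: (nth_find id_row has_z).
Qed.

Definition table_apply T z := row_apply (lookup T z) z.

Lemma table_apply_describes T :
  prefix_code [seq src r | r <- T] -> describes T (table_apply T).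
Proof.
move=> code; apply/describesP => r rT u.
have [lT lz] := lookupP (wcat (src r) (pact (sgm r) u)) code.
by rewrite /table_apply (code_row_unique code lT rT lz (@wprefix_wcat _ _ _)) row_apply_obeys.
Qed.

Lemma table_cont T f : prefix_code [seq src r | r <- T] -> describes T f -> cont f.
Proof.
move=> code /describesP fT x m; have [r rT rx] := code_row_exists x code.
exists (size (src r) + m) => y yx i lt_im.
have ry : wprefix (src r) y.
  by move=> k lt_k; rewrite yx ?ltn_addr // rx.
rewrite (obeysE (fT r rT) ry) (obeysE (fT r rT) rx) /row_apply /wcat /pact /wdrop yx //.
by rewrite addnC ltn_add2l (leq_ltn_trans (leq_subr _ _)).
Qed.

Definition swap_table T : table n := map (@swap_row n) T.

Lemma src_swap_table T : [seq src r | r <- swap_table T] = [seq tgt r | r <- T].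
Proof. by rewrite -map_comp. Qed.

Lemma tgt_swap_table T : [seq tgt r | r <- swap_table T] = [seq src r | r <- T].
Proof. by rewrite -map_comp. Qed.

Lemma is_table_swap H T : is_table H T -> is_table H (swap_table T).
Proof.
case=> [T_gt0 [codeP [codeQ inH]]]; split; first by rewrite size_map.
rewrite src_swap_table tgt_swap_table; do !split => //.
by move=> _ /mapP [r rT ->]; rewrite /= andbC inH.
Qed.

Lemma cancel_of_rows T f g : prefix_code [seq src r | r <- T] ->
  (forall r, r \in T -> obeys f r /\ obeys g (swap_row r)) -> cancel f g.
Proof.
move=> code fgT x; have [r rT rx] := code_row_exists x code.
have [fr gr] := fgT r rT; move: rx => /(wprefix_wcatP _ (sgm r)) [u ->].
by rewrite fr gr.
Qed.

Lemma table_inverse T f :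
  prefix_code [seq src r | r <- T] -> prefix_code [seq tgt r | r <- T] -> describes T f ->
  let g := table_apply (swap_table T) in [/\ describes (swap_table T) g, cancel f g & cancel g f].
Proof.
move=> codeP codeQ /describesP fT g.
have codeS : prefix_code [seq src r | r <- swap_table T] by rewrite src_swap_table.
have /describesP gT := table_apply_describes codeS.
split; first exact/describesP.
  by apply: (cancel_of_rows codeP) => r rT; split; [apply: fT | apply/gT/map_f].
apply: (cancel_of_rows codeS) => _ /mapP [r rT ->].
by split; [apply/gT/map_f | exact: (fT r rT)].
Qed.

Definition pairs A B : seq (row n * row n) :=
  [seq x <- [seq (a, b) | a <- A, b <- B] | wcomparable (tgt x.1) (src x.2)].

Definition comp_table A B : table n := [seq comp_row x.1 x.2 | x <- pairs A B].

Lemma mem_pairs A B a b :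
  ((a, b) \in pairs A B) = [&& a \in A, b \in B & wcomparable (tgt a) (src b)].
Proof.
rewrite mem_filter andbC andbA; congr (_ && _).
apply/allpairsP/andP => [[[x y] [/= xA yB [-> ->]]] | [aA bB]] //.
by exists (a, b).
Qed.

Lemma uniq_pairs A B : uniq A -> uniq B -> uniq (pairs A B).
Proof. by move=> uA uB; apply/filter_uniq/allpairs_uniq => // [[? ?] [? ?]]. Qed.

Lemma pairs_swap A B a b :
  ((swap_row b, swap_row a) \in pairs (swap_table B) (swap_table A)) = ((a, b) \in pairs A B).
Proof. by rewrite !mem_pairs !(mem_map (inv_inj (@swap_rowK n))) wcomparableC andbCA. Qed.

Lemma describes_comp_table A B f g : describes A g -> describes B f ->
  describes (comp_table A B) (fun z => f (g z)).
Proof.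
move=> /describesP gA /describesP fB; apply/describesP => _ /mapP [[a b] + ->].
by rewrite mem_pairs => /and3P [aA bB ab]; apply: obeys_comp_row (gA a aA) (fB b bB) ab.
Qed.

Lemma comp_src_unique A B z :
  prefix_code [seq src r | r <- A] -> prefix_code [seq src r | r <- B] ->
  exists! x, x \in pairs A B /\ wprefix (src (comp_row x.1 x.2)) z.
Proof.
move=> codeA codeB; have /describesP gA := table_apply_describes codeA.
have [a aA az] := code_row_exists z codeA.
have [b bB bgz] := code_row_exists (table_apply A z) codeB.
have ab : wcomparable (tgt a) (src b).
  by apply: wprefix_wcomparable bgz; rewrite (obeysE (gA a aA) az); apply: wprefix_wcat.
exists (a, b); split.
  by split; [rewrite mem_pairs aA bB ab | apply/(wprefix_comp_row (gA a aA) ab az)].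
case=> a' b' [+ pre]; rewrite mem_pairs => /and3P [a'A b'B a'b'].
have a'z : wprefix (src a') z by apply: wprefix_catl pre.
have a'a := code_row_unique codeA a'A aA a'z az; subst a'.
by rewrite (code_row_unique codeB b'B bB _ bgz) //; apply/(wprefix_comp_row (gA a aA) a'b' az).
Qed.

Lemma comp_tgt_unique A B z :
  prefix_code [seq tgt r | r <- A] -> prefix_code [seq tgt r | r <- B] ->
  exists! x, x \in pairs A B /\ wprefix (tgt (comp_row x.1 x.2)) z.
Proof.
(* [tgt (comp_row a b)] is convertible to [src (comp_row (swap_row b) (swap_row a))]. *)
rewrite -!src_swap_table => codeA codeB.
have [[b a] [[ba pre] uniq_ba]] := comp_src_unique z codeB codeA.
exists (swap_row a, swap_row b); split; first by rewrite -pairs_swap !swap_rowK.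
case=> a' b' [mem' pre']; rewrite -pairs_swap in mem'.
by case: (uniq_ba _ (conj mem' pre')) => -> ->; rewrite !swap_rowK.
Qed.

Lemma prefix_code_map (X : eqType) (xs : seq X) (e : X -> word n) (z0 : cantor n) :
  uniq xs -> (forall z, exists! x, x \in xs /\ wprefix (e x) z) -> prefix_code (map e xs).
Proof.
move=> uniq_xs code; split.
  rewrite map_inj_in_uniq // => x1 x2 x1s x2s e12.
  have [x [_ uniq_x]] := code (wcat (e x1) z0).
  rewrite -(uniq_x x1) ?(uniq_x x2) //; split=> //; rewrite ?e12; apply: wprefix_wcat.
move=> z; have [x [[x_in xz] uniq_x]] := code z.
exists (e x); split=> [|_ [/mapP [y y_in ->] yz]]; first by split=> //; apply: map_f.
by rewrite (uniq_x y).
Qed.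

Lemma is_table_comp (z0 : cantor n) (H : {group {perm 'I_n}}) A B :
  is_table H A -> is_table H B -> is_table H (comp_table A B).
Proof.
case=> _ [srcA [tgtA inA]] [_ [srcB [tgtB inB]]].
have uniq_AB : uniq (pairs A B).
  by apply: uniq_pairs; [apply: map_uniq srcA.1 | apply: map_uniq srcB.1].
have [x [[x_in _] _]] := comp_src_unique z0 srcA srcB.
split; first by rewrite size_map; case: (pairs A B) x_in.
rewrite -!map_comp; split; [|split].
- by apply: prefix_code_map z0 uniq_AB _ => z; apply: comp_src_unique.
- by apply: prefix_code_map z0 uniq_AB _ => z; apply: comp_tgt_unique.
move=> _ /mapP [[a b] + ->]; rewrite mem_pairs => /and3P [aA bB _].
case/andP: (inA a aA) => sa ta; case/andP: (inB b bB) => sb tb.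
by rewrite /= sa !groupM ?groupV.
Qed.

Lemma prefix_code_nil : prefix_code [:: [::] : word n].
Proof.
split=> // z; exists [::]; split; first by split=> //; rewrite mem_seq1.
by move=> s []; rewrite mem_seq1 => /eqP.
Qed.

Lemma is_table_id_row (H : {group {perm 'I_n}}) : is_table H [:: id_row].
Proof.
split=> //; split; first exact: prefix_code_nil.
split; first exact: prefix_code_nil.
by move=> r; rewrite mem_seq1 => /eqP -> /=; rewrite group1.
Qed.

Lemma describes_id_row : describes [:: id_row] id.
Proof. by move=> r; rewrite mem_seq1 => /eqP ->. Qed.

Lemma inV_cont H f : inV H f -> cont f.
Proof. by case=> T [[_ [code _]] fT]; apply: table_cont code fT. Qed.

Lemma inV_inverse H f : inV H f -> exists g, [/\ inV H g, cancel f g & cancel g f].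
Proof.
case=> T [tT fT]; have [gT fK gK] := table_inverse tT.2.1 tT.2.2.1 fT.
exists (table_apply (swap_table T)); split=> //.
by exists (swap_table T); split=> //; apply: is_table_swap.
Qed.

End Tables.

Theorem mainTheorem4 (n : nat) (H : {group {perm 'I_n}}) (hn : 2 <= n) :
  (forall f, inV H f -> homeo f) /\
  inV H (fun x => x) /\
  (forall f g, inV H f -> inV H g -> inV H (fun x => f (g x))) /\
  (forall f, inV H f -> exists g, inV H g /\
      (forall x j, g (f x) j = x j) /\ (forall x j, f (g x) j = x j)).
Proof.
have z0 : cantor n := fun=> Ordinal (ltnW hn).
split.
  move=> f fV; have [g [gV fK gK]] := inV_inverse fV.
  split; first exact: inV_cont fV.
  by exists g; split; [exact: inV_cont gV | split=> x j; rewrite ?fK ?gK].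
split; first by exists [:: id_row n]; split; [apply: is_table_id_row | apply: describes_id_row].
split.
  move=> f g [B [tB fB]] [A [tA gA]].
  exists (comp_table A B); split; first exact: (is_table_comp z0 tA tB).
  exact: describes_comp_table.
move=> f /inV_inverse [g [gV fK gK]].
by exists g; split=> //; split=> x j; rewrite ?fK ?gK.
Qed.
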